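(* Let $n\in\mathbb{N}_0$, $k\in\mathbb{N}$ and $\lambda\in\mathbb{C}\setminus\{0\}$. Then $$E_{n}^{\ast(-k)}(\lambda)=\frac{k!\,2^{n-k}}{\lambda^{k}}\,y_{3}\!\left(n,k;\lambda^{2};\frac12,-\frac12\right).$$
   Context: For $k\in\mathbb{N}_0$ and $\lambda\ne0$, the second kind Apostol type Euler numbers of order $-k$ are defined by $$\left(\frac{\lambda e^{t}+\lambda^{-1}e^{-t}}{2}\right)^{k}=\sum_{n=0}^{\infty}E_{n}^{\ast(-k)}(\lambda)\frac{t^{n}}{n!}.$$ For $a,b\in\mathbb{R}$, $\mu\in\mathbb{C}$, $k\in\mathbb{N}_0$, the numbers $y_3(n,k;\mu;a,b)$ are defined by $\frac{e^{bkt}}{k!}(\mu e^{(a-b)t}+1)^{k}=\sum_{n\ge0}y_{3}(n,k;\mu;a,b)\frac{t^{n}}{n!}$. *)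

From HB Require Import structures.
From mathcomp Require Import all_boot all_order all_algebra.
From mathcomp Require Import reals.
From mathcomp Require Export complex.
Set Implicit Arguments. Unset Strict Implicit. Unset Printing Implicit Defensive.
Import Order.TTheory GRing.Theory Num.Theory.
Local Open Scope ring_scope.

(* Formal exponential generating functions over a ring K:
   f represents sum_n f n * t^n / n!. *)
Section EGF.
Variable K : comNzRingType.
Definition egf := nat -> K.
Definition egf_one : egf := fun n => (n == 0)%:R.
Definition egf_exp (a : K) : egf := fun n => a ^+ n.
Definition egf_add (f g : egf) : egf := fun n => f n + g n.
Definition egf_scale (c : K) (f : egf) : egf := fun n => c * f n.
(* product of EGFs = binomial convolution of coefficients *)
Definition egf_mul (f g : egf) : egf :=
  fun n => \sum_(i < n.+1) 'C(n, i)%:R * f i * g (n - i)%N.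
Definition egf_pow (f : egf) (k : nat) : egf := iter k (egf_mul f) egf_one.
End EGF.

(* E_n^{*(-k)}(lambda): ((lambda e^t + lambda^{-1} e^{-t})/2)^k
   = sum_n E_n^{*(-k)}(lambda) t^n/n! *)
Definition Estar_neg {R : realType} (n k : nat) (lam : R[i]) : R[i] :=
  egf_pow (egf_scale (2^-1)
             (egf_add (egf_scale lam (egf_exp 1))
                      (egf_scale lam^-1 (egf_exp (-1))))) k n.

(* y_3(n,k;mu;a,b): e^{bkt}/k! (mu e^{(a-b)t} + 1)^k = sum_n y_3 t^n/n!,
   with a, b real, mu complex. *)
Definition y3 {R : realType} (n k : nat) (mu : R[i]) (a b : R) : R[i] :=
  egf_scale (k`!%:R^-1)
    (egf_mul (egf_exp ((b *+ k)%:C)%C)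
             (egf_pow (egf_add (egf_scale mu (egf_exp ((a - b)%:C)%C)) (egf_one _)) k)) n.

(* Since (λe^t + λ^{-1}e^{-t})/2 = e^{-t}(λ²e^{2t} + 1)/(2λ), the k-th power is
   k!(2λ)^{-k} times the generating function e^{-kt/2}(λ²e^{t} + 1)^k/k! of
   y_3(·,k;λ²;1/2,-1/2) evaluated at 2t, and replacing t by 2t multiplies the
   n-th coefficient by 2^n.  Concretely, both sides expand by the binomial
   theorem into sums of exponentials indexed by j ≤ k, compared term by term. *)

From HB Require Import structures.
From mathcomp Require Import all_boot all_order all_algebra.
From mathcomp Require Import reals complex.
From mathcomp Require Import ring.
Set Implicit Arguments. Unset Strict Implicit. Unset Printing Implicit Defensive.
Import Order.TTheory GRing.Theory Num.Theory.
Local Open Scope ring_scope.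

Section ExpSum.
Variable K : comNzRingType.

Definition egf_expsum {I : Type} (r : seq I) (w a : I -> K) : egf K :=
  fun n => \sum_(i <- r) w i * a i ^+ n.

Lemma egf_mul_addl (f g h : egf K) n :
  egf_mul (egf_add f g) h n = egf_mul f h n + egf_mul g h n.
Proof.
rewrite /egf_mul /egf_add -big_split; apply: eq_bigr => i _ /=.
by rewrite mulrDr mulrDl.
Qed.

Lemma egf_mul_scalel c (f h : egf K) n :
  egf_mul (egf_scale c f) h n = c * egf_mul f h n.
Proof. by rewrite /egf_mul /egf_scale mulr_sumr; apply: eq_bigr => i _; ring. Qed.

Lemma eq_egf_mulr (f g g' : egf K) : g =1 g' -> egf_mul f g =1 egf_mul f g'.
Proof. by move=> eq_g n; apply: eq_bigr => i _; rewrite eq_g. Qed.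

Lemma eq_egf_pow (f g : egf K) k : f =1 g -> egf_pow f k =1 egf_pow g k.
Proof.
move=> eq_fg; elim: k => [|k IH] n //=.
by apply: eq_bigr => i _; rewrite eq_fg IH.
Qed.

Lemma egf_one_exp0 : egf_one K =1 egf_scale 1 (egf_exp 0).
Proof. by move=> n; rewrite /egf_scale /egf_exp mul1r expr0n. Qed.

(* Coefficientwise this is the binomial theorem for [(a + b i) ^+ n]. *)
Lemma egf_mul_exp_expsum (I : Type) (r : seq I) (a : K) (w b : I -> K) :
  egf_mul (egf_exp a) (egf_expsum r w b) =1 egf_expsum r w (fun i => a + b i).
Proof.
move=> n; rewrite /egf_mul /egf_exp /egf_expsum.
under eq_bigr do rewrite mulr_sumr.
rewrite exchange_big /=; apply: eq_bigr => i _.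
rewrite addrC exprDn mulr_sumr; apply: eq_bigr => j _.
by rewrite -mulr_natl; ring.
Qed.

Lemma egf_pow_add_exp (c1 c2 a1 a2 : K) k :
  egf_pow (egf_add (egf_scale c1 (egf_exp a1)) (egf_scale c2 (egf_exp a2))) k
  =1 egf_expsum (index_iota 0 k.+1)
       (fun j => 'C(k, j)%:R * c1 ^+ j * c2 ^+ (k - j))
       (fun j => a1 *+ j + a2 *+ (k - j)).
Proof.
elim: k => [|k IH] n.
  by rewrite /egf_expsum big_nat1 subnn !mulr0n addr0 expr0n /= /egf_one !mul1r.
rewrite [LHS]/= egf_mul_addl !egf_mul_scalel.
rewrite !(eq_egf_mulr _ IH) !egf_mul_exp_expsum /egf_expsum !mulr_sumr.
rewrite [RHS]big_nat_recl // bin0 subn0.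
under [in RHS]eq_bigr do rewrite binS natrD !mulrDl.
rewrite big_split /= addrA [RHS]addrC; congr (_ + _).
  by apply: eq_big_nat => j _; rewrite subSS mulrS addrA exprS !mulrA [c1 * _]mulrC.
rewrite [in RHS]big_nat_recr //= bin_small // mul0r mul0r mul0r addr0.
rewrite big_nat_recl // bin0; congr (_ + _).
  by rewrite subn0 !mulr0n !add0r expr0 !mul1r mulrS exprS mulrA.
apply: eq_big_nat => j /andP[_ lt_jk].
by rewrite subSn // !mulrS addrCA !exprS !mulrA; congr (_ * _); ring.
Qed.

End ExpSum.

Lemma complex_half (R : realType) : ((1 / 2 : R)%:C)%C = 2^-1 :> R[i].
Proof. by rewrite mul1r fmorphV rmorph_nat. Qed.

Lemma Estar_neg_expsum (R : realType) n k (lam : R[i]) :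
  Estar_neg n k lam = egf_expsum (index_iota 0 k.+1)
    (fun j => 'C(k, j)%:R * (2^-1 * lam) ^+ j * (2^-1 / lam) ^+ (k - j))
    (fun j => 1 *+ j + (-1) *+ (k - j)) n.
Proof.
rewrite /Estar_neg -egf_pow_add_exp; apply: eq_egf_pow => m.
by rewrite /egf_scale /egf_add mulrDr !mulrA.
Qed.

Lemma y3_expsum (R : realType) n k (mu : R[i]) (a b : R) :
  y3 n k mu a b = k`!%:R^-1 * egf_expsum (index_iota 0 k.+1)
    (fun j => 'C(k, j)%:R * mu ^+ j * 1 ^+ (k - j))
    (fun j => ((b *+ k)%:C)%C + (((a - b)%:C)%C *+ j + 0 *+ (k - j))) n.
Proof.
rewrite /y3 {1}/egf_scale -egf_mul_exp_expsum; congr (_ * _).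
apply: eq_egf_mulr => m; rewrite -egf_pow_add_exp; apply: eq_egf_pow => i.
by rewrite /egf_add egf_one_exp0.
Qed.

Theorem mainTheorem7 (R : realType) (n k : nat) (lam : R[i]) :
  (0 < k)%N -> lam != 0 ->
  Estar_neg n k lam =
    (k`!)%:R * (2 : R[i]) ^ (n%:Z - k%:Z) / lam ^+ k
      * y3 n k (lam ^+ 2) (1 / 2) (- (1 / 2)).
Proof.
move=> _ lam0.
have two_halves : 2^-1 - - 2^-1 = 1 :> R[i] by rewrite opprK; field.
rewrite Estar_neg_expsum y3_expsum rmorphB rmorphMn rmorphN /= complex_half.
rewrite two_halves mulNrn /egf_expsum !mulr_sumr.
apply: eq_big_nat => j /andP[_]; rewrite ltnS => /subnKC <-.
move: (k - j)%N => m; rewrite addKn.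
have shifted : 2^-1 *- (j + m) + (j%:R + 0 *+ m) = (j%:R + -1 *+ m) / 2 :> R[i].
  by rewrite mul0rn addr0 mulNrn mulrnDr; field.
have two_pow : (2 : R[i]) ^ (n%:Z - (j + m)%:Z) = 2 ^+ n / 2 ^+ (j + m).
  by rewrite expfzDr ?pnatr_eq0 // -exprnN.
rewrite shifted two_pow expr1n mulr1 exprMn -exprM mulnC exprM !exprMn !exprVn !exprD.
by field; rewrite !expf_neq0 ?pnatr_eq0 -?lt0n ?fact_gt0.
Qed.
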